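(* Let $n\geq 3$ and let $C_n^*$ be the bigraded complex described in the context. Then \[\operatorname{gr}_{\mathcal{V}}\alpha_s^*\leq \operatorname{gr}_{\mathcal{V}}\alpha_n^*-2n\ \text{ for } 1\leq s\leq n-1,\qquad \operatorname{gr}_{\mathcal{V}}\widetilde{\alpha}_s^*\leq \operatorname{gr}_{\mathcal{V}}\alpha_n^*-2n\ \text{ for } 1\leq s\leq n-2,\] and \[\operatorname{gr}_{\mathcal{U}}\alpha_s^*\leq \operatorname{gr}_{\mathcal{U}}\alpha_n^*-2n\ \text{ for } n+1\leq s\leq 2n-1,\qquad \operatorname{gr}_{\mathcal{U}}\widetilde{\alpha}_s^*\leq \operatorname{gr}_{\mathcal{U}}\alpha_n^*-2n\ \text{ for } n+1\leq s\leq 2n-2.\]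
   Context: Let $\mathbb{F}=\mathbb{Z}/2$ and $R=\mathbb{F}[\mathcal{U},\mathcal{V}]$, bigraded by $(\operatorname{gr}_{\mathcal{U}},\operatorname{gr}_{\mathcal{V}})$ with $\mathcal{U}$ of bigrading $(-2,0)$ and $\mathcal{V}$ of bigrading $(0,-2)$. For $n\geq 3$, $C_n^*$ is the free $R$-module with basis $\alpha^*_s$ ($1\leq s\leq 2n-1$); $\widetilde{\alpha}^*_s$ ($1\leq s\leq n-2$ and $n+1\leq s\leq 2n-2$); $b^{*,(s)}_{n-1}$ ($1\leq s\leq n-2$); $b^{*,(s)}_{n}$ ($1\leq s\leq 2n-2$); $b^{*,(s)}_{n+1}$ ($n+1\leq s\leq 2n-2$), with $R$-linear differential $\partial$ given by $\partial\alpha^*_s=0$, $\partial\widetilde{\alpha}^*_s=0$, and $\partial b^{*,(s)}_{n-1}=\mathcal{U}^{n(n-1)/2}\mathcal{V}^{n(n-1)/2}\alpha^*_s+\mathcal{V}^{n-s-1}\widetilde{\alpha}^*_s$ for $1\leq s\leq n-2$; $\partial b^{*,(s)}_{n}=\mathcal{U}^{n(n+1)/2-s}\mathcal{V}^{n(n+1)/2}\alpha^*_{s+1}+\mathcal{U}^{n}\widetilde{\alpha}^*_s$ for $1\leq s\leq n-2$; $\partial b^{*,(s)}_{n}=\mathcal{U}^{n(n+1)/2}\mathcal{V}^{n(n-1)/2-n+s+1}\alpha^*_s+\mathcal{U}^{n(n+1)/2-s}\mathcal{V}^{n(n+1)/2}\alpha^*_{s+1}$ for $n-1\leq s\leq n$;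 $\partial b^{*,(s)}_{n}=\mathcal{U}^{n(n+1)/2}\mathcal{V}^{n(n-1)/2-n+s+1}\alpha^*_s+\mathcal{V}^{n}\widetilde{\alpha}^*_s$ for $n+1\leq s\leq 2n-2$; $\partial b^{*,(s)}_{n+1}=\mathcal{U}^{n(n-1)/2}\mathcal{V}^{n(n-1)/2}\alpha^*_{s+1}+\mathcal{U}^{s-n}\widetilde{\alpha}^*_s$ for $n+1\leq s\leq 2n-2$. The basis elements are assigned bigradings $(\operatorname{gr}_{\mathcal{U}},\operatorname{gr}_{\mathcal{V}})$ so that $\partial$ is homogeneous of bigrading $(-1,-1)$; such a bigrading is unique up to an overall shift, and any such choice is fixed. *)

From Stdlib Require Import ZArith List Lia.
Open Scope Z_scope.

Inductive gen : Type :=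
| alpha (s : nat)
| talpha (s : nat)
| b_nm1 (s : nat)
| b_n (s : nat)
| b_np1 (s : nat).

Definition valid_gen (n : nat) (g : gen) : Prop :=
  match g with
  | alpha s => (1 <= s <= 2*n-1)%nat
  | talpha s => (1 <= s <= n-2)%nat \/ (n+1 <= s <= 2*n-2)%nat
  | b_nm1 s => (1 <= s <= n-2)%nat
  | b_n s => (1 <= s <= 2*n-2)%nat
  | b_np1 s => (n+1 <= s <= 2*n-2)%nat
  end.

(* The differential: d g = sum over (i, j, h) of U^i V^j h. *)
Definition dterms (n : nat) (g : gen) : list (nat * nat * gen) :=
  let T := (n * (n - 1) / 2)%nat in
  let S := (n * (n + 1) / 2)%nat in
  match g with
  | alpha _ => nil
  | talpha _ => nil
  | b_nm1 s => (T, T, alpha s) :: (0%nat, (n - s - 1)%nat, talpha s) :: nil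
  | b_n s =>
      if (s <=? n - 2)%nat then
        ((S - s)%nat, S, alpha (s+1)) :: (n, 0%nat, talpha s) :: nil
      else if (s <=? n)%nat then
        (S, (T - n + s + 1)%nat, alpha s) :: ((S - s)%nat, S, alpha (s+1)) :: nil
      else
        (S, (T - n + s + 1)%nat, alpha s) :: (0%nat, n, talpha s) :: nil
  | b_np1 s => (T, T, alpha (s+1)) :: ((s - n)%nat, 0%nat, talpha s) :: nil
  end.

(* (grU, grV) is a bigrading of C_n^* (U of bigrading (-2,0), V of (0,-2))
   for which d is homogeneous of bigrading (-1,-1). *)
Definition is_bigrading (n : nat) (grU grV : gen -> Z) : Prop :=
  forall g, valid_gen n g ->
  forall i j h, In (i, j, h) (dterms n g) ->
    grU h - 2 * Z.of_nat i = grU g - 1 /\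
    grV h - 2 * Z.of_nat j = grV g - 1.

(* Each b-generator has a two-term differential, so homogeneity of the
   differential gives one linear relation between the gradings of the two
   targets.  On the V-side, b_n^(s) and b_{n-1}^(s) (s <= n-2) show that
   gr_V alpha_s grows with s and that gr_V talpha_s lies n(n+1) below
   gr_V alpha_(s+1), while b_n^(n-1) puts alpha_(n-1) exactly 2n below
   alpha_n.  The U-side is symmetric, using b_n^(s), b_(n+1)^(s) (s >= n+1)
   and b_n^(n). *)
From Stdlib Require Import ZArith List Lia.
Open Scope Z_scope.

Lemma triangle_succ (n : nat) : (n * (n + 1) / 2 = n * (n - 1) / 2 + n)%nat.
Proof.
  replace (n * (n + 1))%nat with (n * (n - 1) + n * 2)%nat by nia.
  now rewrite Nat.div_add.
Qed.

Lemma triangle_ge (n : nat) : (3 <= n)%nat -> (n <= n * (n - 1) / 2)%nat.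
Proof.
  intros Hn.
  apply Nat.div_le_lower_bound; nia.
Qed.

Lemma Z_le_chain (f : nat -> Z) (a b : nat) :
  (a <= b)%nat -> (forall k, (a <= k < b)%nat -> f k <= f (S k)) -> f a <= f b.
Proof.
  intros Hab Hstep.
  induction Hab as [|b Hab IH].
  - lia.
  - enough (f a <= f b) by (pose proof (Hstep b ltac:(lia)); lia).
    apply IH; intros k Hk; apply Hstep; lia.
Qed.

Lemma dterms_b_n_low (n s : nat) : (s <= n - 2)%nat ->
  dterms n (b_n s) =
    ((n * (n + 1) / 2 - s)%nat, (n * (n + 1) / 2)%nat, alpha (s + 1))
    :: (n, 0%nat, talpha s) :: nil.
Proof. intros Hs; unfold dterms; now rewrite (proj2 (Nat.leb_le _ _) Hs). Qed.

Lemma dterms_b_n_mid (n s : nat) : (n - 2 < s <= n)%nat ->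
  dterms n (b_n s) =
    ((n * (n + 1) / 2)%nat, (n * (n - 1) / 2 - n + s + 1)%nat, alpha s)
    :: ((n * (n + 1) / 2 - s)%nat, (n * (n + 1) / 2)%nat, alpha (s + 1)) :: nil.
Proof.
  intros Hs; unfold dterms.
  now rewrite (proj2 (Nat.leb_gt s (n - 2)) ltac:(lia)), (proj2 (Nat.leb_le s n) ltac:(lia)).
Qed.

Lemma dterms_b_n_high (n s : nat) : (n < s)%nat ->
  dterms n (b_n s) =
    ((n * (n + 1) / 2)%nat, (n * (n - 1) / 2 - n + s + 1)%nat, alpha s)
    :: (0%nat, n, talpha s) :: nil.
Proof.
  intros Hs; unfold dterms.
  now rewrite (proj2 (Nat.leb_gt s (n - 2)) ltac:(lia)), (proj2 (Nat.leb_gt s n) ltac:(lia)).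
Qed.

Section Bigrading.

Variables (n : nat) (grU grV : gen -> Z).
Hypothesis Hn : (3 <= n)%nat.
Hypothesis Hgr : is_bigrading n grU grV.

Lemma bigrading_two_terms g i j h i' j' h' :
  valid_gen n g -> dterms n g = (i, j, h) :: (i', j', h') :: nil ->
  grU h - 2 * Z.of_nat i = grU h' - 2 * Z.of_nat i' /\
  grV h - 2 * Z.of_nat j = grV h' - 2 * Z.of_nat j'.
Proof.
  intros Hg Hd.
  destruct (Hgr g Hg i j h) as [U1 V1]; [rewrite Hd; now left|].
  destruct (Hgr g Hg i' j' h') as [U2 V2]; [rewrite Hd; right; now left|].
  lia.
Qed.

Lemma grV_talpha s : (1 <= s <= n - 2)%nat ->
  grV (talpha s) = grV (alpha (s + 1)) - 2 * Z.of_nat (n * (n + 1) / 2).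
Proof.
  intros Hs.
  destruct (bigrading_two_terms (b_n s) _ _ _ _ _ _ ltac:(simpl; lia)
              (dterms_b_n_low n s ltac:(lia))).
  lia.
Qed.

Lemma grV_alpha_le_succ s : (1 <= s <= n - 2)%nat ->
  grV (alpha s) <= grV (alpha (s + 1)).
Proof.
  intros Hs.
  destruct (bigrading_two_terms (b_nm1 s) _ _ _ _ _ _ ltac:(simpl; lia) eq_refl).
  pose proof (grV_talpha s Hs).
  rewrite triangle_succ in *.
  lia.
Qed.

Lemma grV_alpha_pred_n : grV (alpha (n - 1)) = grV (alpha n) - 2 * Z.of_nat n.
Proof.
  destruct (bigrading_two_terms (b_n (n - 1)) _ _ _ _ _ _ ltac:(simpl; lia)
              (dterms_b_n_mid n (n - 1) ltac:(lia))).
  (* makes the truncated [n(n-1)/2 - n] in the V-exponent exact *)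
  pose proof (triangle_ge n Hn).
  replace (n - 1 + 1)%nat with n in * by lia.
  rewrite triangle_succ in *.
  lia.
Qed.

Lemma grU_talpha s : (n + 1 <= s <= 2 * n - 2)%nat ->
  grU (talpha s) = grU (alpha s) - 2 * Z.of_nat (n * (n + 1) / 2).
Proof.
  intros Hs.
  destruct (bigrading_two_terms (b_n s) _ _ _ _ _ _ ltac:(simpl; lia)
              (dterms_b_n_high n s ltac:(lia))).
  lia.
Qed.

Lemma grU_alpha_succ_le s : (n + 1 <= s <= 2 * n - 2)%nat ->
  grU (alpha (s + 1)) <= grU (alpha s).
Proof.
  intros Hs.
  destruct (bigrading_two_terms (b_np1 s) _ _ _ _ _ _ ltac:(simpl; lia) eq_refl).
  pose proof (grU_talpha s Hs).
  rewrite triangle_succ in *.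
  lia.
Qed.

Lemma grU_alpha_succ_n : grU (alpha (n + 1)) = grU (alpha n) - 2 * Z.of_nat n.
Proof.
  destruct (bigrading_two_terms (b_n n) _ _ _ _ _ _ ltac:(simpl; lia)
              (dterms_b_n_mid n n ltac:(lia))).
  rewrite triangle_succ in *.
  lia.
Qed.

Lemma grV_alpha_le_pred_n s : (1 <= s <= n - 1)%nat ->
  grV (alpha s) <= grV (alpha (n - 1)).
Proof.
  intros Hs.
  apply (Z_le_chain (fun k => grV (alpha k))); [lia|].
  intros k Hk; rewrite <- Nat.add_1_r.
  apply grV_alpha_le_succ; lia.
Qed.

Lemma grU_alpha_le_succ_n s : (n + 1 <= s <= 2 * n - 1)%nat ->
  grU (alpha s) <= grU (alpha (n + 1)).
Proof.
  intros Hs.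
  enough (- grU (alpha (n + 1)) <= - grU (alpha s)) by lia.
  apply (Z_le_chain (fun k => - grU (alpha k))); [lia|].
  intros k Hk; rewrite <- Nat.add_1_r.
  pose proof (grU_alpha_succ_le k ltac:(lia)); lia.
Qed.

End Bigrading.

Theorem lemma2p8 (n : nat) (grU grV : gen -> Z) :
  (3 <= n)%nat ->
  is_bigrading n grU grV ->
  (forall s, (1 <= s <= n - 1)%nat -> grV (alpha s) <= grV (alpha n) - 2 * Z.of_nat n) /\
  (forall s, (1 <= s <= n - 2)%nat -> grV (talpha s) <= grV (alpha n) - 2 * Z.of_nat n) /\
  (forall s, (n + 1 <= s <= 2 * n - 1)%nat -> grU (alpha s) <= grU (alpha n) - 2 * Z.of_nat n) /\
  (forall s, (n + 1 <= s <= 2 * n - 2)%nat -> grU (talpha s) <= grU (alpha n) - 2 * Z.of_nat n).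
Proof.
  intros Hn Hgr.
  pose proof (grV_alpha_pred_n n grU grV Hn Hgr) as HV.
  pose proof (grU_alpha_succ_n n grU grV Hn Hgr) as HU.
  split; [|split; [|split]]; intros s Hs.
  - pose proof (grV_alpha_le_pred_n n grU grV Hn Hgr s Hs); lia.
  - pose proof (grV_talpha n grU grV Hn Hgr s Hs).
    pose proof (grV_alpha_le_pred_n n grU grV Hn Hgr (s + 1) ltac:(lia)); lia.
  - pose proof (grU_alpha_le_succ_n n grU grV Hn Hgr s Hs); lia.
  - pose proof (grU_talpha n grU grV Hn Hgr s Hs).
    pose proof (grU_alpha_le_succ_n n grU grV Hn Hgr s ltac:(lia)); lia.
Qed.
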